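(* Let $N:\Sigma\to c(X)$ be a positive multimeasure (i.e. $0\in N(E)$ for every $E\in\Sigma$). Let $f,g:\Omega\to\mathbb R$ be measurable functions that are $BDS_m$-integrable with respect to $N$, let $a,b\ge 0$, and assume that $af+bg$ is also $BDS_m$-integrable with respect to $N$. Then for every $E\in\Sigma$ and every $x'\in X'$, $$ s\Big(x',\int_E (af+bg)\,dN\Big)\le a\, s\Big(x',\int_E f\,dN\Big)+b\, s\Big(x',\int_E g\,dN\Big), $$ equivalently $\int_E(af+bg)\,dN\subseteq \overline{a\int_E f\,dN+b\int_E g\,dN}$; i.e. the $BDS_m$-integral with respect to $N$ is a sublinear function of the integrand.
   Context: $(\Omega,\Sigma)$ is a measurable space and $X$ is a Hausdorff locally convex space with dual $X'$. $c(X)$ is the family of nonempty closed convex subsets of $X$. For $C\in c(X)$ and $x'\in X'$, the support function is $s(x',C)=\sup\{\langle x',x\rangle: x\in C\}\in(-\infty,+\infty]$. A multimeasure is a map $M:\Sigma\to c(X)$ such that for every $x'\in X'$ the set function $E\mapsto s(x',M(E))$ is a $\sigma$-finite countably additive measure with values in $(-\infty,+\infty]$. For a multimeasure $N$, $-N$ denotes $E\mapsto -N(E)=\{-x:x\in N(E)\}$, so $s(x',-N(E))=s(-x',N(E))$. $BDS_m$-integral: a measurable $f:\Omega\to\mathbb R$ is $BDS_m$-integrable with respect to $N$ (in $c(X)$) if for every $E\in\Sigma$ and $x'\in X'$ the expression $\int_E f^+\,ds(x',N)+\int_E f^-\,ds(x',-N)$ makes sense, and for every $E\in\Sigma$ there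 is $M_f(E)\in c(X)$ with $s(x',M_f(E))=\int_E f^+\,ds(x',N)+\int_E f^-\,ds(x',-N)$ for all $x'\in X'$; one writes $\int_E f\,dN:=M_f(E)$. (For $f\ge 0$ this reads $s(x',\int_E f\,dN)=\int_E f\,ds(x',N)$.) For sets $A,B$, $\overline{A+B}$ is the closure of the Minkowski sum. *)

From HB Require Import structures.
From mathcomp Require Import all_boot all_order all_algebra.
From mathcomp Require Import all_classical all_reals all_analysis.
From Stdlib Require Import ClassicalEpsilon.

Set Implicit Arguments.
Unset Strict Implicit.
Unset Printing Implicit Defensive.

Import Order.TTheory GRing.Theory Num.Theory.
Local Open Scope classical_set_scope.
Local Open Scope ring_scope.
Local Open Scope ereal_scope.

Section multimeasures.
Context {R : realType}.

Definition dual_elt (X : tvsType R) (x' : X -> R) : Prop :=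
  (forall (a : R) (u v : X), x' (a *: u + v) = a * x' u + x' v)%R
  /\ continuous (x' : X -> R^o).

Definition cc (X : tvsType R) (C : set X) : Prop :=
  C !=set0 /\ closed C /\ convex_set C.

Definition supp (X : tvsType R) (x' : X -> R) (C : set X) : \bar R :=
  ereal_sup [set (x' x)%:E | x in C].

Definition oppmm {T : Type} (X : tvsType R) (N : set T -> set X) :
  set T -> set X := fun E => [set (- x)%R | x in N E].

Context {d : measure_display} {T : measurableType d}.

Definition pinfty_signed_measure (nu : set T -> \bar R) : Prop :=
  nu set0 = 0
  /\ (forall E, measurable E -> -oo < nu E)
  /\ (forall F : (set T)^nat, (forall n, measurable (F n)) ->
        trivIset setT F ->
        (fun n => \sum_(0 <= i < n) nu (F i)) @ \oo --> nu (\bigcup_n F n))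
  /\ (exists F : (set T)^nat, (forall n, measurable (F n))
        /\ \bigcup_n F n = setT /\ (forall n, nu (F n) < +oo)).

Definition multimeasure (X : tvsType R) (M : set T -> set X) : Prop :=
  (forall E, measurable E -> cc (M E))
  /\ (forall x', dual_elt x' -> pinfty_signed_measure (fun E => supp x' (M E))).

Definition positive_mm (X : tvsType R) (N : set T -> set X) : Prop :=
  forall E, measurable E -> N E 0%R.

Definition pvar (nu : set T -> \bar R) (E : set T) : \bar R :=
  ereal_sup [set nu F | F in [set F | measurable F /\ F `<=` E]].
Definition nvar (nu : set T -> \bar R) (E : set T) : \bar R :=
  ereal_sup [set - nu F | F in [set F | measurable F /\ F `<=` E]].

Definition int_pos (nu : set T -> \bar R) (E : set T) (h : T -> R) : \bar R :=
  \int[pvar nu]_(x in E) (h x)%:E - \int[nvar nu]_(x in E) (h x)%:E.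

Definition int_pos_sense (nu : set T -> \bar R) (E : set T) (h : T -> R) : Prop :=
  ~ (\int[pvar nu]_(x in E) (h x)%:E = +oo /\ \int[nvar nu]_(x in E) (h x)%:E = +oo).

Definition posp (f : T -> R) : T -> R := fun w => Num.max (f w) 0%R.
Definition negp (f : T -> R) : T -> R := fun w => Num.max (- f w)%R 0%R.

Definition bds_expr (X : tvsType R) (N : set T -> set X) (f : T -> R)
  (E : set T) (x' : X -> R) : \bar R :=
  int_pos (fun A => supp x' (N A)) E (posp f)
  + int_pos (fun A => supp x' (oppmm N A)) E (negp f).

Definition bds_sense (X : tvsType R) (N : set T -> set X) (f : T -> R)
  (E : set T) (x' : X -> R) : Prop :=
  let I1 := int_pos (fun A => supp x' (N A)) E (posp f) in
  let I2 := int_pos (fun A => supp x' (oppmm N A)) E (negp f) in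
  [/\ int_pos_sense (fun A => supp x' (N A)) E (posp f),
      int_pos_sense (fun A => supp x' (oppmm N A)) E (negp f),
      ~ (I1 = +oo /\ I2 = -oo) & ~ (I1 = -oo /\ I2 = +oo)].

Definition bds_integrable (X : tvsType R) (N : set T -> set X) (f : T -> R) : Prop :=
  measurable_fun setT f
  /\ (forall E, measurable E -> forall x', dual_elt x' -> bds_sense N f E x')
  /\ (forall E, measurable E -> exists M : set X,
        cc M /\ forall x', dual_elt x' -> supp x' M = bds_expr N f E x').

Definition bds_integral (X : tvsType R) (N : set T -> set X) (f : T -> R)
  (E : set T) : set X :=
  epsilon (inhabits set0)
    (fun M => cc M /\ forall x', dual_elt x' -> supp x' M = bds_expr N f E x').

End multimeasures.

From HB Require Import structures.
From mathcomp Require Import all_boot all_order all_algebra.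
From mathcomp Require Import all_classical all_reals all_analysis.
From mathcomp Require Import measurable_realfun.
From Stdlib Require Import ClassicalEpsilon.

Import Order.TTheory GRing.Theory Num.Theory.
Local Open Scope classical_set_scope.
Local Open Scope ring_scope.

(* Because N is positive, 0 is in every N(A),
   so A |-> s(x', N(A)) is a nonnegative countably additive set function;
   the same holds for A |-> s(x', -N(A)) = s(-x', N(A)).  For such a set
   function nu the Jordan decomposition is trivial: the positive variation
   agrees with nu on measurable sets (and is a genuine measure), the
   negative variation vanishes.  Hence both integrals in the definition of
   the BDS_m integral are ordinary Lebesgue integrals of nonnegative
   functions with respect to two measures mu1, mu2.  Pointwise,
   (af+bg)^+ <= a f^+ + b g^+ and (af+bg)^- <= a f^- + b g^-, and the
   nonnegative Lebesgue integral is monotone and positively linear, which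
   yields the inequality between support functions. *)

Section nonnegative_set_function.
Local Open Scope ereal_scope.
Context {R : realType} {d : measure_display} {T : measurableType d}.
Context {nu : set T -> \bar R} (nu0 : nu set0 = 0)
  (nu_ge0 : forall A, measurable A -> 0 <= nu A)
  (nu_sigma : semi_sigma_additive nu).

(* On measurable sets the positive variation of a nonnegative additive
   set function is the set function itself (monotonicity). *)
Lemma pvarE A : measurable A -> pvar nu A = nu A.
Proof.
move=> mA; apply/eqP; rewrite eq_le; apply/andP; split; last first.
  by apply: ereal_sup_ubound; exists A => //; split.
apply: ge_ereal_sup => _ [F [mF FA] <-].
have nu_add := semi_additiveW nu0 (semi_sigma_additive_is_additive nu0 nu_sigma).
have mAF : measurable (A `\` F) by exact: measurableD.
rewrite -(setDUK FA) nu_add ?setDUK //; first by rewrite leeDl // nu_ge0.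
by apply/seteqP; split => x // [Fx [_ nFx]].
Qed.

Lemma pvar0 : pvar nu set0 = 0.
Proof. by rewrite pvarE. Qed.

Lemma pvar_ge0 A : 0 <= pvar nu A.
Proof. by rewrite -nu0; apply: ereal_sup_ubound; exists set0 => //; split. Qed.

Lemma pvar_semi_sigma_additive : semi_sigma_additive (pvar nu).
Proof.
move=> F mF tF mU; rewrite pvarE //.
under eq_fun do under eq_bigr do rewrite pvarE //.
exact: nu_sigma.
Qed.

Definition pvar_measure : {measure set T -> \bar R} :=
  HB.pack (pvar nu)
    (isMeasure.Build _ _ _ (pvar nu) pvar0 pvar_ge0 pvar_semi_sigma_additive).

Lemma nvar_eq0 : nvar nu = mzero.
Proof.
apply: funext => A; apply/eqP; rewrite eq_le; apply/andP; split.
  by apply: ge_ereal_sup => _ [F [mF _] <-]; rewrite oppe_le0 nu_ge0.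
by rewrite /mzero -oppe0 -nu0; apply: ereal_sup_ubound; exists set0 => //; split.
Qed.

Lemma int_posE E h :
  int_pos nu E h = \int[pvar_measure]_(x in E) (h x)%:E.
Proof. by rewrite /int_pos nvar_eq0 integral_measure_zero sube0. Qed.

End nonnegative_set_function.

Section positive_parts.
Local Open Scope ereal_scope.
Context {R : realType} {d : measure_display} {T : measurableType d}.
Implicit Types (f g u v w : T -> R) (a b : R).

Lemma posp_ge0 f x : (0 <= posp f x)%R.
Proof. by rewrite /posp le_max lexx orbT. Qed.

Lemma negpE f : negp f = posp (fun x => - f x)%R.
Proof. by []. Qed.

Lemma measurable_posp E f : measurable_fun setT f ->
  measurable_fun E (EFin \o posp f).
Proof.
move=> mf; apply/measurable_EFinP; apply: measurable_maxr.
  exact: measurable_funS mf.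
exact: measurable_cst.
Qed.

Lemma posp_sublinear a b f g x : (0 <= a)%R -> (0 <= b)%R ->
  (posp (fun y => a * f y + b * g y) x <= a * posp f x + b * posp g x)%R.
Proof.
move=> a0 b0; rewrite /posp ge_max; apply/andP; split.
  by apply: lerD; apply: ler_wpM2l => //; rewrite le_max lexx.
by apply: addr_ge0; apply: mulr_ge0 => //; rewrite le_max lexx orbT.
Qed.

Lemma ge0_integral_le_comb (mu : {measure set T -> \bar R}) E a b u v w :
  measurable E -> (0 <= a)%R -> (0 <= b)%R ->
  (forall x, 0 <= u x)%R -> (forall x, 0 <= v x)%R -> (forall x, 0 <= w x)%R ->
  measurable_fun E (EFin \o u) -> measurable_fun E (EFin \o v) ->
  measurable_fun E (EFin \o w) -> (forall x, w x <= a * u x + b * v x)%R ->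
  \int[mu]_(x in E) (w x)%:E <=
  a%:E * \int[mu]_(x in E) (u x)%:E + b%:E * \int[mu]_(x in E) (v x)%:E.
Proof.
move=> mE a0 b0 u0 v0 w0 mu_ mv mw wle.
have comb_ge0 (c z : R) : (0 <= c)%R -> (0 <= z)%R -> 0 <= c%:E * z%:E.
  by move=> c0 z0; rewrite -EFinM lee_fin mulr_ge0.
have mZu := measurable_funeM a%:E mu_; have mZv := measurable_funeM b%:E mv.
have -> : a%:E * \int[mu]_(x in E) (u x)%:E + b%:E * \int[mu]_(x in E) (v x)%:E
    = \int[mu]_(x in E) (a%:E * (u x)%:E + b%:E * (v x)%:E).
  rewrite ge0_integralD // => [|x _|x _]; rewrite ?comb_ge0 //.
  by rewrite !ge0_integralZl ?lee_fin // => x _; rewrite lee_fin.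
apply: ge0_le_integral => //.
- by move=> x _; rewrite lee_fin.
- exact: emeasurable_funD.
- by move=> x _; rewrite -!EFinM -EFinD lee_fin.
Qed.

Lemma integral_posp_sublinear (mu : {measure set T -> \bar R}) E a b f g :
  measurable E -> (0 <= a)%R -> (0 <= b)%R ->
  measurable_fun setT f -> measurable_fun setT g ->
  measurable_fun setT (fun x => a * f x + b * g x)%R ->
  \int[mu]_(x in E) (posp (fun y => a * f y + b * g y)%R x)%:E <=
  a%:E * \int[mu]_(x in E) (posp f x)%:E + b%:E * \int[mu]_(x in E) (posp g x)%:E.
Proof.
move=> mE a0 b0 mf mg mfg.
apply: ge0_integral_le_comb => //; try exact: posp_ge0;
  try exact: measurable_posp.
by move=> x; exact: posp_sublinear.
Qed.

Lemma posp_negp_integral_sublinear (mu1 mu2 : {measure set T -> \bar R}) E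
    a b f g :
  measurable E -> (0 <= a)%R -> (0 <= b)%R ->
  measurable_fun setT f -> measurable_fun setT g ->
  measurable_fun setT (fun x => a * f x + b * g x)%R ->
  \int[mu1]_(x in E) (posp (fun y => a * f y + b * g y)%R x)%:E
  + \int[mu2]_(x in E) (negp (fun y => a * f y + b * g y)%R x)%:E
  <= a%:E * (\int[mu1]_(x in E) (posp f x)%:E + \int[mu2]_(x in E) (negp f x)%:E)
   + b%:E * (\int[mu1]_(x in E) (posp g x)%:E + \int[mu2]_(x in E) (negp g x)%:E).
Proof.
move=> mE a0 b0 mf mg mfg.
have int_ge0 (mu : {measure set T -> \bar R}) h :
    0 <= \int[mu]_(x in E) (posp h x)%:E.
  by apply: integral_ge0 => x _; rewrite lee_fin posp_ge0.
rewrite !negpE (ge0_muleDr _ (int_ge0 mu1 f) (int_ge0 mu2 _)).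
rewrite (ge0_muleDr _ (int_ge0 mu1 g) (int_ge0 mu2 _)).
rewrite (addeACA (a%:E * \int[mu1]_(x in E) (posp f x)%:E)).
apply: leeD; first exact: integral_posp_sublinear.
have opp_comb : (fun x => - (a * f x + b * g x))%R =
                (fun x => a * (- f x) + b * (- g x))%R.
  by apply: funext => x; rewrite opprD -!mulrN.
have mNfg : measurable_fun setT (fun x => a * (- f x) + b * (- g x))%R.
  by rewrite -opp_comb; exact: measurable_funN.
by rewrite opp_comb; apply: integral_posp_sublinear => //; exact: measurable_funN.
Qed.

End positive_parts.

Section support_functions.
Local Open Scope ereal_scope.
Context {R : realType} {X : tvsType R}.

Lemma dual0 {x' : X -> R} : dual_elt x' -> x' 0%R = 0%R.
Proof.
move=> [lin _]; have := lin 1%R 0%R 0%R.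
rewrite scale1r addr0 mul1r => x'0_twice.
by apply: (addrI (x' 0%R)); rewrite addr0 -x'0_twice.
Qed.

Lemma dualN {x' : X -> R} : dual_elt x' -> forall z, x' (- z)%R = (- x' z)%R.
Proof.
move=> hx z; have := hx.1 (-1)%R z 0%R.
by rewrite addr0 (dual0 hx) addr0 scaleN1r mulN1r.
Qed.

Lemma dual_opp {x' : X -> R} : dual_elt x' -> dual_elt (fun x => - x' x)%R.
Proof.
move=> [lin x'_cont]; split; first by move=> a u v; rewrite lin opprD mulrN.
by move=> x; apply: cvgN; exact: x'_cont.
Qed.

Lemma supp_oppmm {T : Type} (N : set T -> set X) {x' : X -> R} :
  dual_elt x' ->
  (fun A => supp x' (oppmm N A)) = (fun A => supp (fun x => - x' x)%R (N A)).
Proof.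
move=> hx; apply: funext => A; rewrite /supp /oppmm; congr ereal_sup.
apply/seteqP; split.
  by move=> _ [_ [z Nz <-] <-]; exists z => //; rewrite (dualN hx).
by move=> _ [z Nz <-]; exists (- z)%R; [exists z | rewrite (dualN hx)].
Qed.

Context {d : measure_display} {T : measurableType d}.

Lemma supp_positive_mm {N : set T -> set X} {x' : X -> R} :
  multimeasure N -> positive_mm N -> dual_elt x' ->
  [/\ supp x' (N set0) = 0,
      forall A, measurable A -> 0 <= supp x' (N A) &
      semi_sigma_additive (fun A => supp x' (N A))].
Proof.
move=> hN hpos hx; have [nu0 [_ [nu_sigma _]]] := hN.2 x' hx.
split => // [A mA|F mF tF _]; last exact: nu_sigma.
have x'0_in : [set (x' y)%:E | y in N A] (x' 0%R)%:E.
  by exists 0%R => //; exact: hpos.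
by have := ereal_sup_ubound x'0_in; rewrite (dual0 hx).
Qed.

Lemma bds_integralP (N : set T -> set X) (f : T -> R) E x' :
  bds_integrable N f -> measurable E -> dual_elt x' ->
  supp x' (bds_integral N f E) = bds_expr N f E x'.
Proof.
move=> [_ [_ hex]] mE hx; have [M MP] := hex E mE.
pose spec M := cc M /\ forall y, dual_elt y -> supp y M = bds_expr N f E y.
by have [_ ->] := epsilon_spec (inhabits set0) spec (ex_intro spec M MP).
Qed.

End support_functions.

Theorem proposition2p6 (R : realType) (d : measure_display) (T : measurableType d)
  (X : tvsType R) (hX : hausdorff_space X)
  (N : set T -> set X) (hN : multimeasure N) (hpos : positive_mm N)
  (f g : T -> R) (a b : R) (ha : 0 <= a) (hb : 0 <= b)
  (hf : bds_integrable N f) (hg : bds_integrable N g)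
  (hfg : bds_integrable N (fun w => a * f w + b * g w)) :
  forall E : set T, measurable E -> forall x' : X -> R, dual_elt x' ->
    (supp x' (bds_integral N (fun w => (a * f w + b * g w)%R) E)
     <= a%:E * supp x' (bds_integral N f E) + b%:E * supp x' (bds_integral N g E))%E.
Proof.
move=> E mE x' hx.
rewrite !bds_integralP // /bds_expr (supp_oppmm N hx).
have [nu0 nu_ge0 nu_sigma] := supp_positive_mm hN hpos hx.
have [mu0 mu_ge0 mu_sigma] := supp_positive_mm hN hpos (dual_opp hx).
rewrite !(int_posE nu0 nu_ge0 nu_sigma) !(int_posE mu0 mu_ge0 mu_sigma).
by apply: posp_negp_integral_sublinear => //; [exact: hf.1 | exact: hg.1 | exact: hfg.1].
Qed.
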